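(* Let $X$ be a regular Hausdorff space. Then $X$ is an $\aleph_k$-space if and only if $\mathcal{K}(X)$ is an $\aleph_k$-space; and $X$ is an $\overline{\aleph}_k$-space if and only if $\mathcal{K}(X)$ is an $\overline{\aleph}_k$-space.
   Context: $\mathcal{K}(X)$ is the space of nonempty compact subsets of $X$ with the Vietoris topology (base: $\langle U_1,\dots,U_k\rangle=\{K: K\subset\bigcup U_i,\ K\cap U_j\neq\emptyset\ \forall j\}$, $U_i$ open). A family $\mathcal{P}$ of subsets of $Y$ is a $k$-network if for every compact $K$ and open $U\supset K$ some finite $\mathcal{P}'\subset\mathcal{P}$ satisfies $K\subset\bigcup\mathcal{P}'\subset U$; it is compact-countable if each compact set meets only countably many members. A regular space is an $\aleph_k$-space if it has a compact-countable $k$-network, and an $\overline{\aleph}_k$-space if it has a compact-countable $k$-network consisting of closed sets. *)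

From HB Require Import structures.
From mathcomp Require Import all_boot all_order.
From mathcomp Require Import all_classical all_reals all_analysis.
Set Implicit Arguments. Unset Strict Implicit. Unset Printing Implicit Defensive.
Local Open Scope classical_set_scope.

Definition hyperspace (X : topologicalType) :=
  {K : set X | `[< compact K /\ K !=set0 >]}.

Section Hyper.
Variable X : topologicalType.
HB.instance Definition _ := Choice.on (hyperspace X).

Definition vietoris_subbase (p : bool * set X) : set (hyperspace X) :=
  if p.1 then [set K | (proj1_sig K) `<=` p.2]
  else [set K | (proj1_sig K) `&` p.2 !=set0].

HB.instance Definition _ := isSubBaseTopological.Build (hyperspace X)
  [set p : bool * set X | open p.2] vietoris_subbase.
End Hyper.


Definition k_network (Y : topologicalType) (P : set (set Y)) : Prop :=
  forall (K U : set Y), compact K -> open U -> K `<=` U ->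
    exists F : set (set Y), [/\ finite_set F, F `<=` P,
      K `<=` \bigcup_(A in F) A & \bigcup_(A in F) A `<=` U].

Definition compact_countable (Y : topologicalType) (P : set (set Y)) : Prop :=
  forall K : set Y, compact K -> countable [set A | P A /\ A `&` K !=set0].

Definition aleph_k_space (Y : topologicalType) : Prop :=
  regular_space Y /\
  exists P : set (set Y), k_network P /\ compact_countable P.

Definition closed_aleph_k_space (Y : topologicalType) : Prop :=
  regular_space Y /\
  exists P : set (set Y), [/\ k_network P, compact_countable P &
                             forall A, P A -> closed A].

From HB Require Import structures.
From mathcomp Require Import all_boot all_order.
From mathcomp Require Import all_classical all_reals all_analysis.
From mathcomp Require Import finmap.
Local Open Scope classical_set_scope.

(* The boxes <V; W> = [set K | K `<=` V, K meets every w in W], with V and the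
   finitely many w open, form a base of the Vietoris topology.  Regularity of X
   lets one shrink a box around M to a box <V'; W'> around M whose closure
   <cl V'; cl W'> still lies in <V; W>; hence K(X) is regular.
   Given a k-network P of X, a compact family KK of K(X) inside an open U has a
   compact union L and is covered by finitely many such nested boxes inside U.
   Covering the finitely many compact sets L /\ cl V' and L /\ cl V' /\ cl w'
   by members of P lying in V, resp. V /\ w, yields a finite P' of P such that
   every K in KK lies in some <\bigcup S; S> inside U with S a subset of P'.
   So the boxes <\bigcup S; S>, S a finite subfamily of P, form a k-network of
   K(X); it is compact-countable since such a box meets KK only if every
   member of S meets L, and it consists of closed sets when P does.
   Conversely x |-> {x} embeds X into K(X), and preimages of a k-network under
   an embedding form a k-network. *)

(* [compact_cover] is only stated for pointed spaces; any point of a nonempty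
   set serves. *)
Definition pointed_at {T : topologicalType} of T : Type := T.

Section PointedAt.
Variables (T : topologicalType) (a : T).
HB.instance Definition _ := Topological.on (pointed_at a).
HB.instance Definition _ := isPointed.Build (pointed_at a) a.
End PointedAt.

Lemma compact_coverP {T : topologicalType} (A : set T) :
  compact A <-> cover_compact A.
Proof.
have [->|/set0P[a _]] := eqVneq A set0.
  by split=> _; [move=> I D f _ _; exists fset0%fset | exact: compact0].
exact/propeqP/(congr1 (@^~ A) (@compact_cover (pointed_at a))).
Qed.

Lemma finite_subsets {T : choiceType} {A : set T} :
  finite_set A -> finite_set [set S | S `<=` A].
Proof.
move=> /finite_fsetP[A0 ->].
pose f (s : {set A0}) := [set x : T | exists2 y : A0, y \in s & val y = x].
apply: (@sub_finite_set _ _ (f @` setT)); last exact/finite_image/finite_finset.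
move=> S SA; exists (finset (fun y : A0 => `[< S (val y) >])) => //.
apply/seteqP; split=> [x [y + <-]|x Sx]; first by rewrite inE => /asboolP.
by exists [` SA x Sx]%fset; rewrite // inE; exact/asboolP.
Qed.

Lemma closure_subset_closed {T : topologicalType} {A B : set T} :
  closed B -> A `<=` B -> closure A `<=` B.
Proof. by move=> /closure_id cB AB; rewrite cB; exact: closureS. Qed.

Lemma open_bigcap_finite {T : topologicalType} {I : choiceType} {D : set I}
    {f : I -> set T} :
  finite_set D -> (forall i, D i -> open (f i)) -> open (\bigcap_(i in D) f i).
Proof.
move=> /finite_fsetP[D0 ->] fo; rewrite openE => x fx.
by apply: filter_bigI => i iD; apply: open_nbhs_nbhs; split; [exact: fo|exact: fx].
Qed.

Section Regular.
Context {X : topologicalType}.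
Hypothesis regX : regular_space X.

Lemma regular_open_shrink {x : X} {U : set X} : open U -> U x ->
  exists V, [/\ open V, V x & closure V `<=` U].
Proof.
move=> oU Ux; have [C Cx CU] := @regX x U (open_nbhs_nbhs (conj oU Ux)).
exists C°; split; [exact: open_interior | exact: Cx |].
by apply: subset_trans CU; apply: closureS; exact: interior_subset.
Qed.

Lemma regular_compact_shrink {K U : set X} : compact K -> open U -> K `<=` U ->
  exists V, [/\ open V, K `<=` V & closure V `<=` U].
Proof.
move=> /compact_coverP cK oU KU.
have /choice[V Vx] : forall x, exists V : set X,
    K x -> [/\ open V, V x & closure V `<=` U].
  move=> x; have [Kx|nKx] := pselect (K x); last by exists set0.
  by have [V ?] := regular_open_shrink oU (KU _ Kx); exists V.
have oV x : K x -> open (V x) by move=> /Vx[].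
have KV : K `<=` cover K V by move=> x Kx; exists x => //; case: (Vx x Kx).
have [D DK KD] := cK X K V oV KV.
have DKx x : x \in D -> K x by move=> /DK/set_mem.
exists (\bigcup_(x in [set` D]) V x); split => //.
  by apply: bigcup_open => x /DKx/Vx[].
apply: (@subset_trans _ (\bigcup_(x in [set` D]) closure (V x))).
  apply: closure_subset_closed.
    by apply: closed_bigcup => [|x _]; [exact: finite_fset | exact: closed_closure].
  by move=> y [x Dx Vy]; exists x => //; exact: subset_closure.
by move=> y [x /DKx/Vx[_ _]]; apply.
Qed.

End Regular.

Section Vietoris.
Context {X : topologicalType}.
Local Notation KX := (hyperspace X).

Definition box (V : set X) (W : set (set X)) : set KX :=
  [set M | sval M `<=` V /\ forall w, W w -> sval M `&` w !=set0].

Lemma compact_sval (M : KX) : compact (sval M).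
Proof. by case: M => K /= /asboolP[]. Qed.

Lemma boxS (V V' : set X) (W W' : set (set X)) :
  V `<=` V' -> (forall w', W' w' -> exists2 w, W w & w `<=` w') ->
  box V W `<=` box V' W'.
Proof.
move=> VV' WW' M [MV MW]; split=> [x /MV/VV'//|w' /WW'[w /MW[x [Mx wx]] ww']].
by exists x; split; [|exact: ww'].
Qed.

Lemma open_vietoris_subbase (b : bool) (U : set X) :
  open U -> open (vietoris_subbase (b, U)).
Proof.
move=> oU; exists [set vietoris_subbase (b, U)]; last by rewrite bigcup_set1.
by move=> _ ->; exact: finI_from1.
Qed.

Lemma boxE (V : set X) (W : set (set X)) :
  box V W = vietoris_subbase (true, V) `&`
            \bigcap_(w in W) vietoris_subbase (false, w).
Proof. by []. Qed.

Lemma open_box (V : set X) (W : set (set X)) :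
  open V -> finite_set W -> (forall w, W w -> open w) -> open (box V W).
Proof.
move=> oV fW oW; rewrite boxE; apply: openI; first exact: open_vietoris_subbase.
by apply: open_bigcap_finite => // w /oW; exact: open_vietoris_subbase.
Qed.

Lemma setC_box (V : set X) (W : set (set X)) :
  ~` box V W = vietoris_subbase (false, ~` V) `|`
               \bigcup_(w in W) vietoris_subbase (true, ~` w).
Proof.
apply/seteqP; split=> [M /not_andP[/existsNP[x /not_implyP[Mx nVx]]|]|M].
- by left; exists x.
- move=> /existsNP[w /not_implyP[Ww /set0P/negP/negPn/eqP Mw]].
  by right; exists w => // x Mx wx; suff: (sval M `&` w) x by rewrite Mw.
- case=> [[x [Mx nVx]]|[w Ww Mw]] [MV MW]; first exact/nVx/MV.
  by have [x [Mx wx]] := MW _ Ww; exact: Mw Mx wx.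
Qed.

Lemma closed_box (V : set X) (W : set (set X)) :
  closed V -> (forall w, W w -> closed w) -> closed (box V W).
Proof.
move=> cV cW; rewrite -openC setC_box; apply: openU.
  exact/open_vietoris_subbase/closed_openC.
by apply: bigcup_open => w /cW /closed_openC; exact: open_vietoris_subbase.
Qed.

Lemma bigcap_vietoris_subbase (F : {fset bool * set X}) :
  \bigcap_(p in [set` F]) vietoris_subbase p =
  box (\bigcap_(p in [set p | p \in F /\ p.1]) p.2)
      [set p.2 | p in [set p | p \in F /\ ~~ p.1]].
Proof.
apply/seteqP; split=> [M MF|M [MV MW] [[] U] /= pF].
- split=> [x Mx [b U] [pF /= b1]|_ [[b U] [pF /= b1] <-]].
  + by move: (MF _ pF); rewrite /vietoris_subbase b1 /=; apply.
  + by move: (MF _ pF); rewrite /vietoris_subbase (negbTE b1).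
- by move=> x /MV; apply.
- by apply: MW; exists (false, U).
Qed.

Lemma open_box_nbhs {U : set KX} {M : KX} : open U -> U M ->
  exists V W, [/\ open V, finite_set W, (forall w, W w -> open w),
                  box V W M & box V W `<=` U].
Proof.
case=> B sB <- [i Bi iM]; have [F sF iF] := sB _ Bi.
have Fo p : p \in F -> open p.2 by move=> /sF/set_mem.
exists (\bigcap_(p in [set p | p \in F /\ p.1]) p.2).
exists [set p.2 | p in [set p | p \in F /\ ~~ p.1]].
rewrite -iF bigcap_vietoris_subbase in iM; split => //.
- apply: open_bigcap_finite => [|p [pF _]]; last exact: Fo.
  by apply: (sub_finite_set _ (finite_fset F)) => p [].
- apply: finite_image.
  by apply: (sub_finite_set _ (finite_fset F)) => p [].
- by move=> _ [p [pF _] <-]; exact: Fo.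
- by move=> N BN; exists i => //; rewrite -iF bigcap_vietoris_subbase.
Qed.

End Vietoris.

Section NestedBoxes.
Context {X : topologicalType}.
Local Notation KX := (hyperspace X).

(* A pair (w', w) of [nb_pairs] matches a set w' of the inner box with a set w
   of the outer box. *)
Record nested_box := NestedBox {
  nb_inner : set X;
  nb_outer : set X;
  nb_pairs : set (set X * set X) }.

Definition inner_box (b : nested_box) : set KX :=
  box (nb_inner b) (fst @` nb_pairs b).
Definition outer_box (b : nested_box) : set KX :=
  box (nb_outer b) (snd @` nb_pairs b).

Definition nested (b : nested_box) : Prop :=
  [/\ open (nb_inner b), open (nb_outer b), closure (nb_inner b) `<=` nb_outer b,
      finite_set (nb_pairs b) &
      forall p, nb_pairs b p -> [/\ open p.1, open p.2 & closure p.1 `<=` p.2]].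

Lemma open_inner_box (b : nested_box) : nested b -> open (inner_box b).
Proof.
case=> oV _ _ fW oW; apply: open_box => //; first exact: finite_image.
by move=> _ [p Wp <-]; have [] := oW _ Wp.
Qed.

Lemma closure_inner_box (b : nested_box) :
  nested b -> closure (inner_box b) `<=` outer_box b.
Proof.
case=> _ _ cV _ cW.
apply: (@subset_trans _ (box (closure (nb_inner b))
                             [set closure p.1 | p in nb_pairs b])).
  apply: closure_subset_closed.
    by apply: closed_box => [|_ [p _ <-]]; exact: closed_closure.
  apply: boxS => [|_ [p Wp <-]]; first exact: subset_closure.
  by exists p.1; [exists p | exact: subset_closure].
apply: boxS => [//|_ [p Wp <-]].
by exists (closure p.1); [exists p | have [] := cW _ Wp].
Qed.

Lemma nested_box_nbhs {U : set KX} {M : KX} : regular_space X ->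
  open U -> U M -> exists b, [/\ nested b, inner_box b M & outer_box b `<=` U].
Proof.
move=> regX oU UM; have [V [W [oV fW oW [MV MW] VWU]]] := open_box_nbhs oU UM.
have [V' [oV' MV' cV']] :=
  regular_compact_shrink regX (compact_sval M) oV MV.
have /choice[g gW] : forall w, exists w' : set X,
    W w -> [/\ open w', sval M `&` w' !=set0 & closure w' `<=` w].
  move=> w; have [Ww|nWw] := pselect (W w); last by exists set0.
  have [x [Mx wx]] := MW _ Ww.
  have [w' [ow' w'x cw']] := regular_open_shrink regX (oW _ Ww) wx.
  by exists w' => _; split => //; exists x.
exists (NestedBox V' V [set (g w, w) | w in W]); split.
- split=> // [|_ [w Ww <-]]; first exact: finite_image.
  by have [og _ cg] := gW _ Ww; split => //; exact: oW.
- by split=> // _ [_ [w Ww <-] <-]; have [] := gW _ Ww.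
- apply: subset_trans VWU; apply: boxS => // w Ww.
  by exists w => //; exists (g w, w) => //; exists w.
Qed.

Lemma regular_hyperspace : regular_space X -> regular_space KX.
Proof.
move=> regX M A; rewrite nbhsE => -[U [oU UM] UA].
have [b [nb bM bU]] := nested_box_nbhs regX oU UM.
exists (inner_box b).
  by exists (inner_box b) => //; split => //; exact: open_inner_box.
by apply: subset_trans UA; apply: subset_trans bU; exact: closure_inner_box.
Qed.

Lemma compact_bigcup_hyperspace {KK : set KX} :
  compact KK -> compact (\bigcup_(M in KK) sval M).
Proof.
move=> /compact_coverP cKK; apply/compact_coverP => I D f oF cov.
have /choice[DM DMP] : forall M : KX, exists DM : {fset I},
    KK M -> {subset DM <= D} /\ sval M `<=` cover [set` DM] f.
  move=> M; have [KM|nKM] := pselect (KK M); last by exists fset0%fset.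
  have cM : sval M `<=` cover D f by move=> x Mx; apply: cov; exists M.
  have /compact_coverP/(_ I D f oF cM) := compact_sval M.
  by case=> DM ? ?; exists DM.
pose O (M : KX) := vietoris_subbase (true, cover [set` DM M] f).
have oO M : KK M -> open (O M).
  move=> /DMP[DMD _]; apply/open_vietoris_subbase/bigcup_open => i /DMD.
  by move/set_mem; exact: oF.
have [|E EK KE] := cKK KX KK O oO.
  by move=> M KM; exists M => //; have [] := DMP M KM.
have EKK M : M \in E -> KK M by move=> /EK/set_mem.
have fDE : finite_set (\bigcup_(M in [set` E]) [set` DM M]).
  by apply: bigcup_finite => [|M _]; exact: finite_fset.
exists (fset_set (\bigcup_(M in [set` E]) [set` DM M])).
  by move=> i; rewrite in_fset_set // => /set_mem[M /EKK/DMP[DMD _] /DMD].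
move=> x [M /KE[N NE ON] Mx]; have [i iN fi] := ON _ Mx.
by exists i => //; rewrite /= in_fset_set //; apply/mem_set; exists N.
Qed.

Lemma compact_nested_box_cover {KK U : set KX} : regular_space X ->
  compact KK -> open U -> KK `<=` U ->
  exists B : set nested_box, [/\ finite_set B,
    forall b, B b -> nested b /\ outer_box b `<=` U &
    KK `<=` \bigcup_(b in B) inner_box b].
Proof.
move=> regX /compact_coverP cKK oU KKU.
have /choice[nb nbP] : forall M : KX, exists b,
    KK M -> [/\ nested b, inner_box b M & outer_box b `<=` U].
  move=> M; have [KM|nKM] := pselect (KK M); last first.
    by exists (NestedBox set0 set0 set0).
  by have [b ?] := nested_box_nbhs regX oU (KKU _ KM); exists b.
have oO M : KK M -> open (inner_box (nb M)).
  by move=> /nbP[+ _ _]; exact: open_inner_box.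
have cov : KK `<=` cover KK (inner_box \o nb).
  by move=> M KM; exists M => //; have [] := nbP M KM.
have [E EK KE] := cKK KX KK _ oO cov.
have EKK M : M \in E -> KK M by move=> /EK/set_mem.
exists (nb @` [set` E]); split; first exact/finite_image/finite_fset.
  by move=> _ [M /EKK/nbP[? _ ?] <-].
by move=> M /KE[N NE NM]; exists (nb N) => //; exists N.
Qed.

End NestedBoxes.

Section KNetwork.
Context {X : topologicalType}.
Local Notation KX := (hyperspace X).

Definition covers_within (F : set (set X)) (C U : set X) : Prop :=
  C `<=` \bigcup_(A in [set A | F A /\ A `<=` U]) A.

Lemma k_network_covers_within {P : set (set X)} {Pi : set (set X * set X)} :
  k_network P -> finite_set Pi ->
  (forall c, Pi c -> [/\ compact c.1, open c.2 & c.1 `<=` c.2]) ->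
  exists F, [/\ finite_set F, F `<=` P & forall c, Pi c -> covers_within F c.1 c.2].
Proof.
move=> kP fPi PiP.
have /choice[G GP] : forall c : set X * set X, exists G, Pi c ->
    [/\ finite_set G, G `<=` P, c.1 `<=` \bigcup_(A in G) A
      & \bigcup_(A in G) A `<=` c.2].
  move=> c; have [/PiP[cc oc cU]|nPic] := pselect (Pi c); last by exists set0.
  by have [G ?] := kP _ _ cc oc cU; exists G.
exists (\bigcup_(c in Pi) G c); split.
- by apply: bigcup_finite => // c /GP[].
- by move=> A [c /GP[_ GcP _ _] /GcP].
- move=> c Pic x cx; have [_ _ cG GU] := GP _ Pic.
  have [A GcA Ax] := cG _ cx; exists A => //; split; first by exists c.
  by move=> y Ay; apply: GU; exists A.
Qed.

Definition vbox (S : set (set X)) : set KX := box (\bigcup_(A in S) A) S.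

Definition vboxes (P : set (set X)) : set (set KX) :=
  [set vbox S | S in [set S | finite_set S /\ S `<=` P]].

Lemma vbox_between (F : set (set X)) (V : set X) (W : set (set X)) (K : KX) :
  covers_within F (sval K) V ->
  (forall w, W w -> exists2 C, covers_within F C (V `&` w) & sval K `&` C !=set0) ->
  exists S, [/\ S `<=` F, vbox S K & vbox S `<=` box V W].
Proof.
move=> KV KW; exists [set A | (F A /\ A `<=` V) /\ A `&` sval K !=set0].
split; first by move=> A [[]].
  split=> [x Kx|A [_ [x [Ax Kx]]]]; last by exists x.
  by have [A FA Ax] := KV _ Kx; exists A => //; split => //; exists x.
move=> N [NS NA]; split=> [x /NS[A [[_ AV] _] /AV]//|w /KW[C CVw [x [Kx Cx]]]].
have [A [FA AVw] Ax] := CVw _ Cx.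
have [|y [Ny Ay]] := NA A; first by split; [split=> // y /AVw[] | exists x].
by exists y; split=> //; have [] := AVw _ Ay.
Qed.

Definition nested_pieces (L : set X) (b : nested_box) : set (set X * set X) :=
  [set (L `&` closure (nb_inner b), nb_outer b)] `|`
  [set (L `&` closure (nb_inner b) `&` closure p.1, nb_outer b `&` p.2)
     | p in nb_pairs b].

Lemma finite_nested_pieces (L : set X) (b : nested_box) :
  nested b -> finite_set (nested_pieces L b).
Proof.
case=> _ _ _ fW _; rewrite finite_setU.
by split; [exact: finite_set1 | exact: finite_image].
Qed.

Lemma nested_piece_compact_open (L : set X) (b : nested_box) c :
  compact L -> nested b -> nested_pieces L b c ->
  [/\ compact c.1, open c.2 & c.1 `<=` c.2].
Proof.
move=> cL [_ oV cV _ oW] [->|[p /oW[_ op2 cp] <-]] /=.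
  split=> //; first exact: compact_closedI cL (@closed_closure _ _).
  by move=> x [_ /cV].
split; [|exact: openI|by move=> x [[_ /cV ?] /cp]].
by apply: compact_closedI; [apply: compact_closedI cL _|]; exact: closed_closure.
Qed.

Lemma inner_box_vbox {F : set (set X)} {L : set X} {b : nested_box} {K : KX} :
  sval K `<=` L -> inner_box b K ->
  (forall c, nested_pieces L b c -> covers_within F c.1 c.2) ->
  exists S, [/\ S `<=` F, vbox S K & vbox S `<=` outer_box b].
Proof.
move=> KL [KV KW] Fcov; apply: vbox_between => [x Kx|_ [p Wp <-]].
  apply: (Fcov (_, _)); first by left.
  by split; [exact: KL | exact/subset_closure/KV].
have [x [Kx px]] := KW p.1 (ex_intro2 _ _ p Wp erefl).
exists (L `&` closure (nb_inner b) `&` closure p.1).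
  by apply: (Fcov (_, _)); right; exists p.
exists x; split=> //; split; last exact: subset_closure.
by split; [exact: KL | exact/subset_closure/KV].
Qed.

Lemma k_network_vboxes (P : set (set X)) : regular_space X ->
  k_network P -> k_network (vboxes P).
Proof.
move=> regX kP KK U cKK oU KKU.
have cL := compact_bigcup_hyperspace cKK; set L := \bigcup_(M in KK) _ in cL.
have [B [fB BU KKB]] := compact_nested_box_cover regX cKK oU KKU.
pose Pi := \bigcup_(b in B) nested_pieces L b.
have fPi : finite_set Pi.
  by apply: bigcup_finite fB _ => b /BU[nb _]; exact: finite_nested_pieces.
have PiP c : Pi c -> [/\ compact c.1, open c.2 & c.1 `<=` c.2].
  by case=> b /BU[nb _]; exact: nested_piece_compact_open.
have [F [fF FP Fcov]] := k_network_covers_within kP fPi PiP.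
exists (vbox @` [set S | S `<=` F /\ vbox S `<=` U]); split.
- apply: finite_image; apply: (sub_finite_set _ (finite_subsets fF)).
  by move=> S [].
- move=> _ [S [SF _] <-]; exists S => //.
  by split; [exact: sub_finite_set SF fF | exact: subset_trans SF FP].
- move=> K KK_K; have [b Bb bK] := KKB _ KK_K.
  have KL : sval K `<=` L by move=> x Kx; exists K.
  have [S [SF SK Sb]] :=
    inner_box_vbox KL bK (fun c bc => Fcov c (ex_intro2 _ _ b Bb bc)).
  exists (vbox S) => //; exists S => //; split => //.
  exact: subset_trans Sb (BU b Bb).2.
- by move=> N [_ [S [_ SU] <-]]; exact: SU.
Qed.

Lemma compact_countable_vboxes (P : set (set X)) :
  compact_countable P -> compact_countable (vboxes P).
Proof.
move=> cP KK cKK.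
have := cP _ (compact_bigcup_hyperspace cKK); set L := \bigcup_(M in KK) _ => cPL.
have sub : [set A | vboxes P A /\ A `&` KK !=set0] `<=`
    vbox @` [set S | S `<=` [set A | P A /\ A `&` L !=set0] /\ finite_set S].
  move=> _ [[S [fS SP] <-] [N [[NS NA] KN]]]; exists S => //; split => // A SA.
  split; first exact: SP.
  by have [x [Nx Ax]] := NA _ SA; exists x; split => //; exists N.
apply: (sub_countable (subset_card_le sub)).
apply: (sub_countable (card_image_le _ _)).
exact: countable_finite_subset.
Qed.

Lemma closed_vboxes (P : set (set X)) : (forall A, P A -> closed A) ->
  forall A, vboxes P A -> closed A.
Proof.
move=> cP _ [S [fS SP] <-]; apply: closed_box => [|A /SP/cP//].
by apply: closed_bigcup => // A /SP/cP.
Qed.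

End KNetwork.

Section Preimage.
Context {X Y : topologicalType} {f : X -> Y}.
Hypothesis f_cont : continuous f.

Lemma compact_countable_preimage (Q : set (set Y)) :
  compact_countable Q -> compact_countable [set f @^-1` A | A in Q].
Proof.
move=> cQ K cK.
have cfK := continuous_compact (continuous_subspaceT f_cont) cK.
have sub : [set B | [set f @^-1` A | A in Q] B /\ B `&` K !=set0] `<=`
    preimage f @` [set A | Q A /\ A `&` (f @` K) !=set0].
  move=> _ [[A QA <-] [x [Ax Kx]]]; exists A => //; split => //.
  by exists (f x); split => //; exists x.
apply: (sub_countable (subset_card_le sub)).
apply: (sub_countable (card_image_le _ _)).
exact: cQ.
Qed.

Lemma closed_preimage_family (Q : set (set Y)) : (forall A, Q A -> closed A) ->
  forall B, [set f @^-1` A | A in Q] B -> closed B.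
Proof. by move=> cQ _ [A /cQ cA <-]; move/continuous_closedP : f_cont; apply. Qed.

Hypothesis f_initial : forall U, open U -> exists2 G, open G & f @^-1` G = U.

Lemma k_network_preimage (Q : set (set Y)) :
  k_network Q -> k_network [set f @^-1` A | A in Q].
Proof.
move=> kQ K U cK oU KU; have [G oG fGU] := f_initial _ oU.
have cfK := continuous_compact (continuous_subspaceT f_cont) cK.
have [|F [fF FQ fKF FG]] := kQ _ _ cfK oG.
  by move=> _ [x Kx <-]; rewrite -fGU in KU; exact: KU.
exists (preimage f @` F); split; first exact: finite_image.
- by move=> _ [A FA <-]; exists A => //; exact: FQ.
- move=> x Kx; have [A FA Ax] := fKF (f x) (ex_intro2 _ _ x Kx erefl).
  by exists (f @^-1` A) => //; exists A.
- by move=> x [_ [A FA <-] Ax]; rewrite -fGU; exact: FG (ex_intro2 _ _ A FA Ax).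
Qed.

End Preimage.

Section Singleton.
Context {X : topologicalType}.
Local Notation KX := (hyperspace X).

Definition hyper_set1 (x : X) : KX :=
  exist _ [set x] (asboolT (conj (@compact_set1 _ x) (ex_intro _ x erefl))).

Lemma preimage_hyper_set1_box (V : set X) (W : set (set X)) :
  hyper_set1 @^-1` box V W = V `&` \bigcap_(w in W) w.
Proof.
apply/seteqP; split=> [x [xV xW]|x [Vx Wx]].
  by split=> [|w /xW[_ [-> //]]]; exact: xV.
by split=> [_ ->//|w Ww]; exists x; split=> //; exact: Wx.
Qed.

Lemma continuous_hyper_set1 : continuous hyper_set1.
Proof.
apply/continuousP => U oU; rewrite openE => x Ux.
have [V [W [oV fW oW BxV BU]]] := open_box_nbhs oU Ux.
apply: (@filterS _ _ _ (hyper_set1 @^-1` box V W)); first by move=> y /BU.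
apply: open_nbhs_nbhs; split; last exact: BxV.
by rewrite preimage_hyper_set1_box; apply: openI => //; exact: open_bigcap_finite.
Qed.

Lemma open_as_preimage_hyper_set1 (U : set X) :
  open U -> exists2 G, open G & hyper_set1 @^-1` G = U.
Proof.
move=> oU; exists (box U set0); first exact: open_box.
by rewrite preimage_hyper_set1_box bigcap_set0 setIT.
Qed.

End Singleton.

Theorem corollary3p5 (X : topologicalType) :
  hausdorff_space X -> regular_space X ->
  (aleph_k_space X <-> aleph_k_space (hyperspace X)) /\
  (closed_aleph_k_space X <-> closed_aleph_k_space (hyperspace X)).
Proof.
move=> _ regX; have regKX := regular_hyperspace regX.
have kX :=
  k_network_preimage continuous_hyper_set1 open_as_preimage_hyper_set1.
have cX := compact_countable_preimage continuous_hyper_set1.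
have clX := closed_preimage_family continuous_hyper_set1.
split; split.
- case=> _ [P [kP cP]]; split=> //; exists (vboxes P).
  by split; [exact: k_network_vboxes | exact: compact_countable_vboxes].
- case=> _ [Q [kQ cQ]]; split=> //; exists [set hyper_set1 @^-1` A | A in Q].
  by split; [exact: kX | exact: cX].
- case=> _ [P [kP cP clP]]; split=> //; exists (vboxes P).
  split; [exact: k_network_vboxes | exact: compact_countable_vboxes |].
  exact: closed_vboxes.
- case=> _ [Q [kQ cQ clQ]]; split=> //; exists [set hyper_set1 @^-1` A | A in Q].
  by split; [exact: kX | exact: cX | exact: clX].
Qed.
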